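(* Let $\mathcal{A}$ be a finite list of elements of a finitely generated abelian group $\Gamma$ and let $G$ be a finite abelian group. Then $\#\mathcal{M}(\mathcal{A};\Gamma,G)=\chi^G_{\mathcal{A}}(\#G)$.
   Context: $\mathcal{M}(\mathcal{A};\Gamma,G)=\mathrm{Hom}(\Gamma,G)\smallsetminus\bigcup_{\alpha\in\mathcal{A}}\{\varphi\mid\varphi(\alpha)=0\}$. $r_\Gamma$ is the rank of $\Gamma$, $r_{\mathcal{S}}$ the rank of $\langle\mathcal{S}\rangle$, $m(\mathcal{S};G)=\#\mathrm{Hom}((\Gamma/\langle\mathcal{S}\rangle)_{\mathrm{tor}},G)$ and $\chi^G_{\mathcal{A}}(t)=\sum_{\mathcal{S}\subset\mathcal{A}}(-1)^{\#\mathcal{S}}m(\mathcal{S};G)t^{r_\Gamma-r_{\mathcal{S}}}$ (sublists distinguished by index). *)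

From HB Require Import structures.
From mathcomp Require Import all_boot all_order all_algebra.
From Stdlib Require Import ClassicalEpsilon.
Set Implicit Arguments. Unset Strict Implicit. Unset Printing Implicit Defensive.
Import Order.TTheory GRing.Theory Num.Theory.
Local Open Scope ring_scope.

Definition has_card (T : Type) (P : T -> Prop) (n : nat) : Prop :=
  exists f : 'I_n -> T, injective f /\ forall x, P x <-> exists i, f i = x.

(* #P : the number of elements of P (meaningful when P is finite). *)
Definition pcard (T : Type) (P : T -> Prop) : nat :=
  epsilon (inhabits 0%N) (fun n => has_card P n).

Definition is_hom (Gam G : zmodType) (phi : Gam -> G) : Prop :=
  forall x y, phi (x - y) = phi x - phi y.

Definition in_span (Gam : zmodType) (s : seq Gam) (x : Gam) : Prop :=
  exists c : 'I_(size s) -> int, x = \sum_(i < size s) s`_i *~ c i.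

Definition fin_gen (Gam : zmodType) : Prop :=
  exists s : seq Gam, forall x, in_span s x.

Definition in_gen (Gam : zmodType) (A : seq Gam) (S : {set 'I_(size A)}) (x : Gam) : Prop :=
  exists c : 'I_(size A) -> int, x = \sum_(i in S) A`_i *~ c i.

Definition zindep (Gam : zmodType) (n : nat) (v : 'I_n -> Gam) : Prop :=
  forall c : 'I_n -> int, \sum_(i < n) v i *~ c i = 0 -> forall i, c i = 0.

Definition is_rank (Gam : zmodType) (H : Gam -> Prop) (r : nat) : Prop :=
  (exists v : 'I_r -> Gam, (forall i, H (v i)) /\ zindep v) /\
  (forall v : 'I_r.+1 -> Gam, (forall i, H (v i)) -> ~ zindep v).

Definition zrank (Gam : zmodType) (H : Gam -> Prop) : nat :=
  epsilon (inhabits 0%N) (fun r => is_rank H r).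

Definition rankG (Gam : zmodType) : nat := zrank (fun _ : Gam => True).
Definition rankS (Gam : zmodType) (A : seq Gam) (S : {set 'I_(size A)}) : nat :=
  zrank (in_gen S).

Definition Mset (Gam : zmodType) (A : seq Gam) (G : zmodType) (phi : Gam -> G) : Prop :=
  is_hom phi /\ forall a, a \in A -> phi a != 0.

Definition tor_mod (Gam : zmodType) (A : seq Gam) (S : {set 'I_(size A)}) (x : Gam) : Prop :=
  exists n : nat, (0 < n)%N /\ in_gen S (x *+ n).

(* Hom((Gamma/<S>)_tor, G), represented by the functions psi : Gamma -> G that
   are additive on the preimage T_S of (Gamma/<S>)_tor, vanish on <S>, and are
   0 outside T_S (canonical representative). *)
Definition hom_tor (Gam : zmodType) (A : seq Gam) (S : {set 'I_(size A)})
    (G : zmodType) (psi : Gam -> G) : Prop :=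
  (forall x y, tor_mod S x -> tor_mod S y -> psi (x - y) = psi x - psi y) /\
  (forall x, in_gen S x -> psi x = 0) /\
  (forall x, ~ tor_mod S x -> psi x = 0).

Definition mSG (Gam : zmodType) (A : seq Gam) (S : {set 'I_(size A)}) (G : zmodType) : nat :=
  pcard (@hom_tor Gam A S G).

Definition chiA (Gam : zmodType) (A : seq Gam) (G : zmodType) (t : int) : int :=
  \sum_(S : {set 'I_(size A)})
     (-1) ^+ #|S| * (mSG S G)%:Z * t ^+ (rankG Gam - rankS S)%N.

(* A homomorphism Gamma -> G is determined by its values on a finite generating
   list, so the homomorphisms are coded by the points of a finite set, and
   inclusion-exclusion over the elements of A that are sent to 0 turns #M into
   \sum_S (-1)^#S #Hom(Gamma/<S>, G).  Let T_S be the preimage of the torsion of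
   Gamma/<S>.  Then Gamma/T_S is finitely generated and torsion-free, hence free
   on some e_1, ..., e_r: a Euclidean reduction of the coefficients of a relation
   modulo T_S shrinks a generating family until it becomes independent modulo
   T_S.  So Gamma = T_S + Z e, and a homomorphism killing <S> is the same as a
   homomorphism T_S -> G killing <S> together with arbitrary images of the e_i,
   whence #Hom(Gamma/<S>, G) = m(S;G) #G^r.  Finally r = r_Gamma - r_S, by the
   same reduction applied to <S> modulo torsion. *)

From HB Require Import structures.
From mathcomp Require Import all_boot all_order all_algebra zify boolp.
From Stdlib Require Import ClassicalEpsilon.
Import Order.TTheory GRing.Theory Num.Theory.
Local Open Scope ring_scope.
Set Implicit Arguments. Unset Strict Implicit. Unset Printing Implicit Defensive.

Section Hom.
Variables (Gam G : zmodType) (phi : Gam -> G) (hphi : is_hom phi).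

Lemma hom0 : phi 0 = 0.
Proof. by move: (hphi 0 0); rewrite !subrr. Qed.

Lemma homN x : phi (- x) = - phi x.
Proof. by move: (hphi 0 x); rewrite !sub0r hom0 sub0r. Qed.

Lemma homD x y : phi (x + y) = phi x + phi y.
Proof. by have := hphi x (- y); rewrite opprK => ->; rewrite homN opprK. Qed.

Lemma homMn x n : phi (x *+ n) = phi x *+ n.
Proof. by elim: n => [|n IHn]; rewrite ?mulr0n ?hom0 // !mulrS homD IHn. Qed.

Lemma homMz x c : phi (x *~ c) = phi x *~ c.
Proof.
case: c => n; first by rewrite -!pmulrn homMn.
by rewrite NegzE !mulrNz homN -!pmulrn homMn.
Qed.

Lemma hom_sum I r (P : pred I) (F : I -> Gam) :
  phi (\sum_(i <- r | P i) F i) = \sum_(i <- r | P i) phi (F i).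
Proof. exact: (big_morph phi homD hom0). Qed.

End Hom.

Lemma has_card_uniq T (P : T -> Prop) m n : has_card P m -> has_card P n -> m = n.
Proof.
have le : forall m n, has_card P m -> has_card P n -> (m <= n)%N.
  move=> {}m {}n [f [f_inj fP]] [g [_ gP]].
  have cover i : exists j, g j = f i by apply/gP/fP; exists i.
  have [h hE] := fin_all_exists cover.
  have h_inj : injective h by move=> i j hij; apply: f_inj; rewrite -!hE hij.
  by have := leq_card h h_inj; rewrite !card_ord.
by move=> Pm Pn; apply/eqP; rewrite eqn_leq !le.
Qed.

Lemma pcardE T (P : T -> Prop) n : has_card P n -> pcard P = n.
Proof.
move=> Pn; apply: (has_card_uniq (P := P)) => //.
exact: (epsilon_spec (inhabits 0%N) (has_card P) (ex_intro _ n Pn)).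
Qed.

Lemma has_card_finset (F : finType) (A : {set F}) : has_card (fun x => x \in A) #|A|.
Proof.
exists enum_val; split; first exact: enum_val_inj.
move=> x; split=> [Ax|[i <-]]; last exact: enum_valP.
by exists (enum_rank_in Ax x); rewrite enum_rankK_in.
Qed.

Lemma has_card_image T U (P : T -> Prop) (Q : U -> Prop) (f : U -> T) k :
  has_card Q k -> (forall u v, Q u -> Q v -> f u = f v -> u = v) ->
  (forall x, P x <-> exists2 u, Q u & f u = x) -> has_card P k.
Proof.
move=> [g [g_inj gQ]] f_inj fP; have Qg i : Q (g i) by apply/gQ; exists i.
exists (f \o g); split=> [i j /f_inj fij|x]; first exact/g_inj/fij.
split; first by case/fP=> u /gQ[i <-] <-; exists i.
by case=> i <-; apply/fP; exists (g i).
Qed.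

Lemma has_card_ext T (P Q : T -> Prop) k :
  (forall x, P x <-> Q x) -> has_card Q k -> has_card P k.
Proof.
move=> PQ Qk; apply: (has_card_image Qk (f := id)) => // x.
by split=> [/PQ Qx|[y /PQ Py <-]]; [exists x|].
Qed.

Lemma subrACA (Gam : zmodType) (x y z t : Gam) : (x - y) - (z - t) = (x - z) - (y - t).
Proof. by rewrite !opprB addrACA [in RHS]addrACA [- z + _]addrC. Qed.

Definition zcomb (Gam : zmodType) n (g : 'I_n -> Gam) (c : 'I_n -> int) : Gam :=
  \sum_(i < n) g i *~ c i.

Section ZComb.
Variables (Gam : zmodType) (n : nat) (g : 'I_n -> Gam).

Lemma zcombB c d : zcomb g (fun i => c i - d i) = zcomb g c - zcomb g d.
Proof. by rewrite /zcomb -sumrB; apply: eq_bigr => i _; rewrite mulrzBr. Qed.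

Lemma zcombMz c k : zcomb g (fun i => c i * k) = zcomb g c *~ k.
Proof. by rewrite /zcomb mulrz_suml; apply: eq_bigr => i _; rewrite mulrzA. Qed.

Lemma zcomb0 : zcomb g (fun _ => 0) = 0.
Proof. by rewrite /zcomb big1 // => i _; rewrite mulr0z. Qed.

Lemma zcomb_eq0 c : (forall i, c i = 0) -> zcomb g c = 0.
Proof. by move=> c0; rewrite /zcomb big1 // => i _; rewrite c0 mulr0z. Qed.

Lemma zcomb_null c : (forall i, g i = 0) -> zcomb g c = 0.
Proof. by move=> g0; apply: big1 => i _; rewrite g0 mul0rz. Qed.

Lemma zcomb_delta i : zcomb g (fun k => (k == i)%:Z) = g i.
Proof.
rewrite /zcomb (bigD1 i) //= eqxx mulr1z big1 ?addr0 // => k /negPf->.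
by rewrite mulr0z.
Qed.

Lemma hom_zcomb (G : zmodType) (phi : Gam -> G) c :
  is_hom phi -> phi (zcomb g c) = zcomb (phi \o g) c.
Proof. by move=> hphi; rewrite /zcomb (hom_sum hphi); apply: eq_bigr => i _; rewrite homMz. Qed.

End ZComb.

Record saturated (Gam : zmodType) (T : Gam -> Prop) := Saturated {
  sat0 : T 0;
  satB : forall x y, T x -> T y -> T (x - y);
  sat_divn : forall x k, (0 < k)%N -> T (x *+ k) -> T x }.

Section Saturated.
Variables (Gam : zmodType) (T : Gam -> Prop) (satT : saturated T).

Lemma satN x : T x -> T (- x).
Proof. by move=> Tx; have := satB satT (sat0 satT) Tx; rewrite sub0r. Qed.

Lemma satD x y : T x -> T y -> T (x + y).
Proof. by move=> Tx /satN Ty; have := satB satT Tx Ty; rewrite opprK. Qed.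

Lemma satMz x c : T x -> T (x *~ c).
Proof.
move=> Tx; have TMn k : T (x *+ k).
  by elim: k => [|k IHk]; [rewrite mulr0n; apply: sat0 | rewrite mulrS; apply: satD].
by case: c => k; rewrite ?NegzE ?mulrNz -pmulrn //; apply: satN.
Qed.

Lemma sat_divz x c : c != 0 -> T (x *~ c) -> T x.
Proof.
case: c => k nz; first by rewrite -pmulrn; apply: (sat_divn satT); rewrite lt0n.
by rewrite NegzE mulrNz => /satN; rewrite opprK -pmulrn; apply: (sat_divn satT).
Qed.

(* The e_i form a basis of the image of the span of g in Gam / T. *)
Definition has_basis_mod n (g : 'I_n -> Gam) := exists r (e : 'I_r -> Gam),
  [/\ forall i, exists c, e i = zcomb g c,
      forall c, exists d, T (zcomb g c - zcomb e d)
    & forall d, T (zcomb e d) -> forall i, d i = 0].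

Lemma has_basis_mod_transfer n m (g : 'I_n -> Gam) (g' : 'I_m -> Gam) :
  has_basis_mod g' -> (forall c', exists c, zcomb g' c' = zcomb g c) ->
  (forall c, exists c', T (zcomb g c - zcomb g' c')) -> has_basis_mod g.
Proof.
move=> [r [e [e_span cover e_indep]]] g'_sub g_sub; exists r, e; split=> // [i|c].
  by have [c ->] := e_span i; apply: g'_sub.
have [c' Tc'] := g_sub c; have [d Td] := cover c'; exists d.
by rewrite -(subrK (zcomb g' c') (zcomb g c)) -addrA; apply: satD.
Qed.

Lemma has_basis_mod_indep n (g : 'I_n -> Gam) :
  (forall c, T (zcomb g c) -> forall i, c i = 0) -> has_basis_mod g.
Proof.
move=> g_indep; exists n, g; split=> // [i|c].
  by exists (fun k => (k == i)%:Z); rewrite zcomb_delta.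
by exists c; rewrite subrr; apply: sat0.
Qed.

Lemma has_basis_mod_drop n (g : 'I_n.+1 -> Gam) i0 :
  T (g i0) -> has_basis_mod (g \o lift i0) -> has_basis_mod g.
Proof.
move=> Tg0 /has_basis_mod_transfer; apply=> [c'|c].
  exists (fun k => oapp c' 0 (unlift i0 k)).
  rewrite /zcomb (bigD1_ord i0) //= unlift_none mulr0z add0r.
  by apply: eq_bigr => k _; rewrite liftK.
exists (c \o lift i0); rewrite /zcomb (bigD1_ord i0) //= addrK.
exact: satMz.
Qed.

Definition shear n (g : 'I_n -> Gam) i j t k := if k == i then g i + g j *~ t else g k.

Lemma zcomb_shear n (g : 'I_n -> Gam) i j t c : i != j ->
  zcomb (shear g i j t) c = zcomb g (fun k => if k == j then c k + t * c i else c k).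
Proof.
move=> neq_ij; pose bump (x : Gam) (l k : 'I_n) := if k == l then x else 0.
have sum_bump x l : \sum_(k < n) bump x l k = x.
  by rewrite (bigD1 l) //= /bump eqxx big1 ?addr0 // => k /negPf->.
transitivity (zcomb g c + g j *~ (t * c i)).
  rewrite /zcomb -(sum_bump (g j *~ (t * c i)) i) -big_split; apply: eq_bigr => k _.
  by rewrite /shear /bump; case: eqP => [->|_] /=; rewrite ?addr0 // mulrzDl mulrzA.
rewrite /zcomb -(sum_bump (g j *~ (t * c i)) j) -big_split; apply: eq_bigr => k _.
by rewrite /bump; case: eqP => [->|_] /=; rewrite ?addr0 // mulrzDr.
Qed.

Lemma has_basis_mod_shear n (g : 'I_n -> Gam) i j t :
  i != j -> has_basis_mod (shear g i j t) -> has_basis_mod g.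
Proof.
move=> neq_ij /has_basis_mod_transfer; apply=> [c'|c].
  by eexists; rewrite zcomb_shear.
exists (fun k => if k == j then c k - t * c i else c k).
rewrite zcomb_shear // (negPf neq_ij) [X in _ - X](_ : _ = zcomb g c) ?subrr.
  exact: sat0.
by congr zcomb; apply: funext => k; case: eqP => // _; rewrite subrK.
Qed.

Lemma zcomb_shear_mod n (g : 'I_n -> Gam) (c : 'I_n -> int) i k : i != k ->
  zcomb (shear g i k (c k %/ c i)%Z) (fun l => if l == k then (c k %% c i)%Z else c l)
  = zcomb g c.
Proof.
move=> neq_ik; rewrite zcomb_shear // (negPf neq_ik); congr zcomb; apply: funext => l.
by case: eqP => [->|//]; rewrite addrC -divz_eq.
Qed.

(* Euclid on a relation c modulo T: while two coefficients are nonzero, shear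
   the family so as to reduce the larger one modulo the smaller; once a single
   coefficient is left, saturation puts its generator in T and it is dropped. *)
Lemma has_basis_mod_of_relation n :
  (forall g : 'I_n -> Gam, has_basis_mod g) ->
  forall (g : 'I_n.+1 -> Gam) c i0, T (zcomb g c) -> c i0 != 0 -> has_basis_mod g.
Proof.
move=> IHn g c i0; have [m] := ubnP (\sum_k `|c k|)%N.
elim: m g c i0 => // m IHm g c i0 weight Tc ci0.
case: (boolP [exists j, (j != i0) && (c j != 0)]) => [/existsP[j /andP[ji0 cj]]|].
  have [i [k [neq_ik ci le_ik]]] :
      exists i k, [/\ i != k, c i != 0 & (`|c i| <= `|c k|)%N].
    case: (leqP `|c i0| `|c j|) => [le|/ltnW le]; first by exists i0, j; rewrite eq_sym.
    by exists j, i0.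
  apply: (has_basis_mod_shear neq_ik (t := (c k %/ c i)%Z)).
  set c' := fun l => if l == k then (c k %% c i)%Z else c l.
  apply: (IHm _ c' i); last 2 first.
  - by rewrite zcomb_shear_mod.
  - by rewrite /c' (negPf neq_ik).
  have lt_k : (`|c' k| < `|c k|)%N.
    rewrite /c' eqxx; have := ltz_mod (c k) ci; have := modz_ge0 (c k) ci; lia.
  rewrite (bigD1 k) //=; under eq_bigr => l /negPf nlk do rewrite /c' nlk.
  by rewrite (bigD1 k) //= in weight; lia.
move/existsPn=> single.
have c_single : zcomb g c = g i0 *~ c i0.
  rewrite /zcomb (bigD1 i0) //= big1 ?addr0 // => l ne_l.
  by have := single l; rewrite ne_l /= negbK => /eqP->; rewrite mulr0z.
by apply: (has_basis_mod_drop (i0 := i0)) => //; apply: (sat_divz ci0); rewrite -c_single.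
Qed.

Lemma has_basis_mod_all n (g : 'I_n -> Gam) : has_basis_mod g.
Proof.
elim: n g => [|n IHn] g; first by apply: has_basis_mod_indep => c _ [].
have [[c [i [Tc ci]]]|indep] := pselect (exists c i, T (zcomb g c) /\ c i != 0).
  exact: has_basis_mod_of_relation Tc ci.
apply: has_basis_mod_indep => c Tc i; apply/eqP/negPn/negP => ci.
by apply: indep; exists c, i.
Qed.

End Saturated.

Lemma int_rows_dependent m k (M : 'I_m -> 'I_k -> int) : (k < m)%N ->
  exists2 x : 'I_m -> int, exists j, x j != 0 & forall i, \sum_j x j * M j i = 0.
Proof.
move=> lt_km; pose A : 'M[rat]_(m, k) := \matrix_(j, i) (M j i)%:~R.
have : kermx A != 0 by rewrite kermx_eq0 /row_free; have := rank_leq_col A; lia.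
case/rowV0Pn=> y /sub_kermxP yA /rV0Pn[l yl].
(* clear the denominators of the rational kernel vector y *)
pose D := \prod_j denq (y 0 j).
have yD j : (numq (y 0 j) * \prod_(l | l != j) denq (y 0 l))%:~R = y 0 j * D%:~R :> rat.
  by rewrite [D](bigD1 j) //= !intrM numqE mulrA.
exists (fun j => numq (y 0 j) * \prod_(l | l != j) denq (y 0 l)).
  exists l; rewrite mulf_neq0 ?numq_eq0 //.
  by rewrite prodf_seq_neq0; apply/allP => u _; apply/implyP => _; apply: denq_neq0.
move=> i; apply: (@intr_inj rat); rewrite rmorph_sum /= mulr0z.
under eq_bigr => j _ do rewrite intrM yD mulrAC.
have := congr1 (fun B : 'rV_k => B 0 i) yA; rewrite !mxE => yAi.
by rewrite -mulr_suml (eq_bigr (fun j => y 0 j * A j i)) ?yAi ?mul0r // => j _; rewrite mxE.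
Qed.

Section Rank.
Variable Gam : zmodType.

Lemma zindep_widen n1 n2 (le_n12 : (n1 <= n2)%N) (v : 'I_n2 -> Gam) :
  zindep v -> zindep (v \o widen_ord le_n12).
Proof.
move=> v_indep c vc0 i.
pose c' (k : 'I_n2) := oapp c 0 (insub (val k) : option 'I_n1).
have c'E j : c' (widen_ord le_n12 j) = c j by rewrite /c' /= valK.
rewrite -c'E; apply: v_indep.
rewrite (bigID (fun k : 'I_n2 => (k < n1)%N)) /= [X in _ + X]big1 ?addr0.
  by rewrite big_ord_narrow -[RHS]vc0; apply: eq_bigr => j _; rewrite c'E.
by move=> k /negbTE k_ge; rewrite /c' insubF ?mulr0z.
Qed.

Lemma is_rank_uniq (P : Gam -> Prop) a b : is_rank P a -> is_rank P b -> a = b.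
Proof.
have ge a' b' : is_rank P a' -> is_rank P b' -> ~ (a' < b')%N.
  move=> [_ maxa] [[v [Pv v_indep]] _] lt_ab.
  exact: (maxa _ (fun i => Pv _) (zindep_widen (le_n12 := lt_ab) v_indep)).
by move=> ra rb; case: (ltngtP a b) => // lt; [case: (ge _ _ ra rb) | case: (ge _ _ rb ra)].
Qed.

Lemma zrankE (P : Gam -> Prop) r : is_rank P r -> zrank P = r.
Proof.
move=> Pr; apply: (is_rank_uniq (P := P)) => //.
exact: (epsilon_spec (inhabits 0%N) (is_rank P) (ex_intro _ r Pr)).
Qed.

Lemma is_rank_basis (P : Gam -> Prop) r (e : 'I_r -> Gam) :
  (forall i, P (e i)) -> zindep e ->
  (forall x, P x -> exists k c, (0 < k)%N /\ x *+ k = zcomb e c) -> is_rank P r.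
Proof.
move=> Pe e_indep e_span; split; first by exists e.
move=> v Pv v_indep.
have span j : exists p : nat * ('I_r -> int), (0 < p.1)%N /\ v j *+ p.1 = zcomb e p.2.
  by have [k [c kc]] := e_span _ (Pv j); exists (k, c).
have [p pE] := fin_all_exists span.
have [x [j0 xj0] xM] := int_rows_dependent (fun j i => (p j).2 i) (ltnSn r).
suff sum0 : \sum_(j < r.+1) v j *~ (x j * (p j).1%:Z) = 0.
  have /eqP := v_indep _ sum0 j0; rewrite mulf_eq0 (negPf xj0) /=.
  by case: (pE j0); case: (p j0).1.
transitivity (\sum_(j < r.+1) \sum_(i < r) e i *~ ((p j).2 i * x j)).
  apply: eq_bigr => j _; rewrite mulrC mulrzA -pmulrn (proj2 (pE j)) /zcomb mulrz_suml.
  by apply: eq_bigr => i _; rewrite mulrzA.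
rewrite exchange_big big1 // => i _; rewrite -mulrz_sumr.
by rewrite (eq_bigr (fun j => x j * (p j).2 i)) ?xM ?mulr0z // => j _; rewrite mulrC.
Qed.

End Rank.

Definition sat (Gam : zmodType) (H : Gam -> Prop) (x : Gam) : Prop :=
  exists n : nat, (0 < n)%N /\ H (x *+ n).

Lemma saturated_sat (Gam : zmodType) (H : Gam -> Prop) :
  H 0 -> (forall x y, H x -> H y -> H (x - y)) -> saturated (sat H).
Proof.
move=> H0 HB; have HMn x k : H x -> H (x *+ k).
  move=> Hx; elim: k => [|k IHk]; first by rewrite mulr0n.
  by have := HB _ _ Hx (HB _ _ H0 IHk); rewrite sub0r opprK mulrS.
split=> [|x y [m [m0 Hm]] [n [n0 Hn]]|x k k0 [n [n0 Hn]]].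
- by exists 1%N; rewrite mulr1n.
- exists (m * n)%N; rewrite muln_gt0 m0 mulrnBl; split=> //.
  by apply: HB; [| rewrite mulnC]; rewrite mulrnA; apply: HMn.
- by exists (k * n)%N; rewrite muln_gt0 k0 mulrnA.
Qed.

Definition catf (T : Type) m n (a : 'I_m -> T) (b : 'I_n -> T) (k : 'I_(m + n)) : T :=
  match split k with inl i => a i | inr j => b j end.

Lemma catf_lshift T m n (a : 'I_m -> T) (b : 'I_n -> T) i : catf a b (lshift n i) = a i.
Proof. by rewrite /catf (unsplitK (inl _ i)). Qed.

Lemma catf_rshift T m n (a : 'I_m -> T) (b : 'I_n -> T) j : catf a b (rshift m j) = b j.
Proof. by rewrite /catf (unsplitK (inr _ j)). Qed.

Lemma zcomb_catf (Gam : zmodType) m n (a : 'I_m -> Gam) (b : 'I_n -> Gam) c :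
  zcomb (catf a b) c = zcomb a (c \o lshift n) + zcomb b (c \o @rshift m n).
Proof.
rewrite /zcomb big_split_ord /=.
by congr (_ + _); apply: eq_bigr => i _; rewrite ?catf_lshift ?catf_rshift.
Qed.

Lemma zcomb_catf2 (Gam : zmodType) m n (a : 'I_m -> Gam) (b : 'I_n -> Gam) ca cb :
  zcomb (catf a b) (catf ca cb) = zcomb a ca + zcomb b cb.
Proof.
by rewrite zcomb_catf; congr (_ + _); congr zcomb; apply: funext => i;
  rewrite /= ?catf_lshift ?catf_rshift.
Qed.

Lemma span_rank_basis (Gam : zmodType) n (g : 'I_n -> Gam) : exists r (e : 'I_r -> Gam),
  [/\ forall i, exists c, e i = zcomb g c, zindep e &
      forall c, exists k d, (0 < k)%N /\ zcomb g c *+ k = zcomb e d].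
Proof.
have tor_sat : saturated (sat (fun x : Gam => x = 0)).
  by apply: saturated_sat => // x y -> ->; rewrite subr0.
have [r [e [e_span cover e_indep]]] := has_basis_mod_all tor_sat g.
exists r, e; split=> // [d ed0|c].
  by apply: e_indep; exists 1%N; rewrite mulr1n.
have [d [k [k0 /eqP]]] := cover c; rewrite mulrnBl subr_eq0 => /eqP gk.
by exists k, (fun i => d i * k%:Z); rewrite zcombMz -pmulrn gk.
Qed.

Section HomCodes.
Variables (Gam : zmodType) (s : seq Gam) (s_gen : forall x, in_span s x) (G : finZmodType).

Definition hom_code (phi : Gam -> G) : {ffun 'I_(size s) -> G} :=
  [ffun i : 'I_(size s) => phi s`_i].

Lemma hom_code_inj phi psi :
  is_hom phi -> is_hom psi -> hom_code phi = hom_code psi -> phi = psi.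
Proof.
move=> hphi hpsi /ffunP code_eq; apply: funext => x; have [c ->] := s_gen x.
rewrite (hom_sum hphi) (hom_sum hpsi); apply: eq_bigr => i _.
by have := code_eq i; rewrite !ffunE (homMz hphi) (homMz hpsi) => ->.
Qed.

Definition is_hom_code w := `[< exists2 phi, is_hom phi & hom_code phi = w >].

Definition hom_decode w : Gam -> G :=
  epsilon (inhabits (fun=> 0)) (fun phi => is_hom phi /\ hom_code phi = w).

Lemma hom_decodeP w : is_hom_code w -> is_hom (hom_decode w) /\ hom_code (hom_decode w) = w.
Proof.
move=> /asboolP[phi hphi code_phi].
by apply: (epsilon_spec _ (fun psi => is_hom psi /\ hom_code psi = w)); exists phi.
Qed.

Lemma is_hom_code_hom phi : is_hom phi -> is_hom_code (hom_code phi).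
Proof. by move=> hphi; apply/asboolP; exists phi. Qed.

Lemma hom_codeK phi : is_hom phi -> hom_decode (hom_code phi) = phi.
Proof.
move=> hphi; have [hdec code_dec] := hom_decodeP (is_hom_code_hom hphi).
exact: hom_code_inj.
Qed.

Definition hom_set (P : (Gam -> G) -> Prop) :=
  [set w | is_hom_code w & `[< P (hom_decode w) >]].

Lemma hom_setP P w : w \in hom_set P ->
  [/\ is_hom (hom_decode w), P (hom_decode w) & hom_code (hom_decode w) = w].
Proof. by rewrite inE => /andP[/hom_decodeP[hdec code_dec] /asboolP]. Qed.

Lemma hom_code_in_set (P : (Gam -> G) -> Prop) phi :
  is_hom phi -> P phi -> hom_code phi \in hom_set P.
Proof. by move=> hphi Pphi; rewrite inE is_hom_code_hom // hom_codeK //=; apply/asboolP. Qed.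

Lemma has_card_hom_set P : has_card (fun phi => is_hom phi /\ P phi) #|hom_set P|.
Proof.
apply: (has_card_image (has_card_finset _) (f := hom_decode)) => [u v|phi].
  by move=> /hom_setP[_ _ code_u] /hom_setP[_ _ code_v] dec_uv; rewrite -code_u dec_uv.
split=> [[hphi Pphi]|[w /hom_setP[hdec Pdec _] <-] //].
by exists (hom_code phi); rewrite ?hom_codeK ?hom_code_in_set.
Qed.

Lemma hom_setE P (q : pred {ffun 'I_(size s) -> G}) :
  (forall phi, is_hom phi -> P phi <-> q (hom_code phi)) ->
  hom_set P = [set w | is_hom_code w & q w].
Proof.
move=> Pq; apply/setP => w; rewrite !inE.
case w_code: (is_hom_code w) => //=; have [hdec code_dec] := hom_decodeP w_code.
have := Pq _ hdec; rewrite code_dec => Pq_w.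
by apply/asboolP/idP => /Pq_w.
Qed.

Definition kills (H : Gam -> Prop) (phi : Gam -> G) := forall x, H x -> phi x = 0.

Variable A : seq Gam.

Definition killed (i : 'I_(size A)) w := hom_decode w A`_i == 0.

Lemma hom_set_nonvanishing :
  hom_set (fun phi => forall a, a \in A -> phi a != 0)
  = [set w | is_hom_code w & [forall i, ~~ killed i w]].
Proof.
apply: hom_setE => phi hphi; rewrite /killed hom_codeK //; split.
  by move=> nz; apply/forallP => i; apply/nz/mem_nth.
by move=> /forallP nz a /(nthP 0)[i lt_iA <-]; apply: (nz (Ordinal lt_iA)).
Qed.

Lemma hom_set_vanishing (S : {set 'I_(size A)}) :
  hom_set (fun phi => forall i, i \in S -> phi A`_i = 0)
  = [set w | is_hom_code w & [forall i in S, killed i w]].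
Proof.
apply: hom_setE => phi hphi; rewrite /killed hom_codeK //.
by split=> [van|/forall_inP van i /van/eqP //]; apply/forall_inP => i /van ->.
Qed.

Section GeneratedSubgroup.
Variable S : {set 'I_(size A)}.

Definition gen_S (i : 'I_(size A)) : Gam := if i \in S then A`_i else 0.

Lemma in_genE x : in_gen S x <-> exists c, x = zcomb gen_S c.
Proof.
have E c : \sum_(i in S) A`_i *~ c i = zcomb gen_S c.
  rewrite /zcomb big_mkcond; apply: eq_bigr => i _.
  by rewrite /gen_S; case: (i \in S); rewrite ?mul0rz.
by split=> -[c ->]; exists c; rewrite E.
Qed.

Lemma in_gen0 : in_gen S 0.
Proof. by apply/in_genE; exists (fun=> 0); rewrite zcomb0. Qed.

Lemma in_genB x y : in_gen S x -> in_gen S y -> in_gen S (x - y).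
Proof.
by move=> /in_genE[c ->] /in_genE[d ->]; apply/in_genE; exists (fun i => c i - d i); rewrite zcombB.
Qed.

Lemma in_gen_zcomb n (v : 'I_n -> Gam) c : (forall i, in_gen S (v i)) -> in_gen S (zcomb v c).
Proof.
move=> v_in; apply: big_ind => [|x y|i _]; first exact: in_gen0.
  by move=> Sx /(in_genB in_gen0); rewrite sub0r => /(in_genB Sx); rewrite opprK.
by have /in_genE[d ->] := v_in i; apply/in_genE; exists (fun k => d k * c i); rewrite zcombMz.
Qed.

Lemma in_gen_tor x : in_gen S x -> tor_mod S x.
Proof. by exists 1%N; rewrite mulr1n. Qed.

Lemma tor_mod_saturated : saturated (tor_mod S).
Proof. exact: saturated_sat in_gen0 in_genB. Qed.

Lemma kills_in_gen (phi : Gam -> G) :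
  is_hom phi -> kills (in_gen S) phi <-> forall i, i \in S -> phi A`_i = 0.
Proof.
move=> hphi; split=> [kill i iS|vanish x /in_genE[c ->]].
  by apply: kill; apply/in_genE; exists (fun k => (k == i)%:Z); rewrite zcomb_delta /gen_S iS.
rewrite hom_zcomb // zcomb_null // => i /=; rewrite /gen_S.
by case: ifP => [/vanish|_]; rewrite ?hom0.
Qed.

(* e is a basis of Gam modulo T_S, so that x = proj x + zcomb e (coef x)
   with proj x in T_S. *)
Section Complement.
Variables (r : nat) (e : 'I_r -> Gam).
Hypotheses (e_cover : forall x, exists c, tor_mod S (x - zcomb e c))
           (e_indep : forall c, tor_mod S (zcomb e c) -> forall i, c i = 0).

Definition coef x : 'I_r -> int :=
  epsilon (inhabits (fun=> 0)) (fun c => tor_mod S (x - zcomb e c)).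

Definition proj x := x - zcomb e (coef x).

Lemma proj_tor x : tor_mod S (proj x).
Proof. exact: (epsilon_spec _ _ (e_cover x)). Qed.

Lemma coef_uniq x c : tor_mod S (x - zcomb e c) -> coef x = c.
Proof.
move=> Tc; suff Tdiff : tor_mod S (zcomb e (fun k => coef x k - c k)).
  by apply: funext => i; apply/eqP; rewrite -subr_eq0; apply/eqP; exact: e_indep Tdiff i.
rewrite zcombB; have -> : zcomb e (coef x) - zcomb e c = (x - zcomb e c) - proj x.
  by rewrite /proj subrACA subrr sub0r opprB.
exact: (satB tor_mod_saturated) Tc (proj_tor x).
Qed.

Lemma coefB x y : coef (x - y) = (fun i => coef x i - coef y i).
Proof.
by apply: coef_uniq; rewrite zcombB subrACA; apply: (satB tor_mod_saturated); apply: proj_tor.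
Qed.

Lemma projB x y : proj (x - y) = proj x - proj y.
Proof. by rewrite /proj coefB zcombB subrACA. Qed.

Lemma coef_tor x : tor_mod S x -> coef x = fun=> 0.
Proof. by move=> Tx; apply: coef_uniq; rewrite zcomb0 subr0. Qed.

Lemma proj_id x : tor_mod S x -> proj x = x.
Proof. by move=> Tx; rewrite /proj coef_tor // zcomb0 subr0. Qed.

Lemma coef_e j : coef (e j) = fun k => (k == j)%:Z.
Proof. by apply: coef_uniq; rewrite zcomb_delta subrr; apply: sat0 tor_mod_saturated. Qed.

Lemma proj_e j : proj (e j) = 0.
Proof. by rewrite /proj coef_e zcomb_delta subrr. Qed.

Definition kills_S_basis (phi : Gam -> G) := kills (in_gen S) phi /\ forall i, phi (e i) = 0.

Lemma hom_proj (phi : Gam -> G) :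
  is_hom phi -> (forall i, phi (e i) = 0) -> phi =1 phi \o proj.
Proof. by move=> hphi phi_e x; rewrite /= /proj hphi hom_zcomb // zcomb_null // subr0. Qed.

Lemma kills_S_basis_proj (phi : Gam -> G) : is_hom phi -> kills (in_gen S) phi ->
  is_hom (phi \o proj) /\ kills_S_basis (phi \o proj).
Proof.
move=> hphi kill; split=> [x y|]; first by rewrite /= projB hphi.
split=> [x Sx|i] /=; last by rewrite proj_e hom0.
by rewrite proj_id ?kill //; apply: in_gen_tor.
Qed.

Definition res (phi : Gam -> G) x : G := if `[< tor_mod S x >] then phi x else 0.

Lemma hom_tor_res (phi : Gam -> G) :
  is_hom phi -> kills (in_gen S) phi -> hom_tor S (res phi).
Proof.
move=> hphi kill; rewrite /res; split; last split.
- by move=> x y Tx Ty; rewrite !asboolT //; apply: (satB tor_mod_saturated).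
- by move=> x Sx; rewrite asboolT ?kill //; apply: in_gen_tor.
- by move=> x nTx; rewrite asboolF.
Qed.

Lemma hom_tor_proj (psi : Gam -> G) :
  hom_tor S psi -> is_hom (psi \o proj) /\ kills_S_basis (psi \o proj).
Proof.
move=> [psi_add [psi_S _]]; split=> [x y|]; first by rewrite /= projB psi_add //; apply: proj_tor.
split=> [x Sx|i] /=; last by rewrite proj_e psi_S //; apply: in_gen0.
by rewrite proj_id ?psi_S //; apply: in_gen_tor.
Qed.

Lemma res_proj (psi : Gam -> G) : hom_tor S psi -> res (psi \o proj) = psi.
Proof.
move=> [_ [_ psi_out]]; apply: funext => x; rewrite /res /=.
by case: asboolP => [Tx|nTx]; [rewrite proj_id | rewrite psi_out].
Qed.

Lemma mSG_hom_set : mSG S G = #|hom_set kills_S_basis|.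
Proof.
apply: pcardE; apply: (has_card_image (has_card_hom_set kills_S_basis) (f := res)).
  move=> phi psi [hphi [_ phi_e]] [hpsi [_ psi_e]] res_eq; apply: funext => x.
  rewrite (hom_proj hphi phi_e) (hom_proj hpsi psi_e) /=.
  by have := congr1 (fun f => f (proj x)) res_eq; rewrite /res asboolT //; apply: proj_tor.
move=> psi; split=> [psi_tor|[phi [hphi [kill _]] <-]]; last exact: hom_tor_res.
by exists (psi \o proj); [apply: hom_tor_proj | apply: res_proj].
Qed.

Definition extend (psi : Gam -> G) (g : {ffun 'I_r -> G}) x := psi x + zcomb g (coef x).

Lemma extend_hom (psi : Gam -> G) g : is_hom psi -> kills (in_gen S) psi ->
  is_hom (extend psi g) /\ kills (in_gen S) (extend psi g).
Proof.
move=> hpsi kill; split=> [x y|x Sx]; rewrite /extend.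
  by rewrite hpsi coefB zcombB opprD addrACA.
by rewrite kill // coef_tor ?zcomb0 ?addr0 //; apply: in_gen_tor.
Qed.

Lemma extend_e (psi : Gam -> G) g j : psi (e j) = 0 -> extend psi g (e j) = g j.
Proof. by move=> psi_e; rewrite /extend psi_e coef_e zcomb_delta add0r. Qed.

Lemma extend_proj (phi : Gam -> G) :
  is_hom phi -> extend (phi \o proj) [ffun i => phi (e i)] = phi.
Proof.
move=> hphi; apply: funext => x; rewrite /extend /=.
have -> : zcomb [ffun i => phi (e i)] (coef x) = phi (zcomb e (coef x)).
  by rewrite hom_zcomb //; apply: eq_bigr => i _; rewrite ffunE.
by rewrite -homD // /proj subrK.
Qed.

Lemma has_card_kills_S : has_card (fun phi => is_hom phi /\ kills (in_gen S) phi)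
  (#|hom_set kills_S_basis| * #|G| ^ r).
Proof.
set H := hom_set kills_S_basis.
have -> : (#|H| * #|G| ^ r)%N = #|setX H [set: {ffun 'I_r -> G}]|.
  by rewrite cardsX cardsT card_ffun card_ord.
apply: (has_card_image (has_card_finset _) (f := fun p => extend (hom_decode p.1) p.2)).
  move=> [w g] [w' g'] /setXP[/hom_setP[hdec [_ dec_e] code_w] _].
  move=> /setXP[/hom_setP[hdec' [_ dec'_e] code_w'] _] /= ext_eq.
  have g_eq : g = g'.
    by apply/ffunP => j; rewrite -(extend_e g (dec_e j)) ext_eq extend_e.
  rewrite -code_w -code_w' -g_eq; congr (hom_code _, _); apply: funext => x.
  by apply: (addIr (zcomb g (coef x))); have := congr1 (fun f => f x) ext_eq; rewrite /extend g_eq.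
move=> phi; split=> [[hphi kill]|[[w g] /setXP[/hom_setP[hdec [kill _] _] _] <-]].
  have [hproj kproj] := kills_S_basis_proj hphi kill.
  exists (hom_code (phi \o proj), [ffun i => phi (e i)]).
    by apply/setXP; split; [apply: hom_code_in_set | rewrite inE].
  by rewrite /= hom_codeK // extend_proj.
exact: extend_hom.
Qed.

Section Concat.
Variables (rH : nat) (eH : 'I_rH -> Gam).
Hypotheses (eH_in : forall i, in_gen S (eH i)) (eH_indep : zindep eH)
  (eH_span : forall x, in_gen S x -> exists k c, (0 < k)%N /\ x *+ k = zcomb eH c).

Lemma zindep_catf : zindep (catf eH e).
Proof.
move=> c; change (zcomb (catf eH e) c = 0 -> forall i, c i = 0); rewrite zcomb_catf => sum0.
have cr j : c (rshift rH j) = 0.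
  suff /in_gen_tor Te : in_gen S (zcomb e (c \o @rshift rH r)) by exact: e_indep Te j.
  have -> : zcomb e (c \o @rshift rH r) = 0 - zcomb eH (c \o lshift r).
    by rewrite -sum0 addrAC subrr add0r.
  by apply: in_genB in_gen0 (in_gen_zcomb _ eH_in).
have cl i : c (lshift r i) = 0.
  by apply: (eH_indep (c := c \o lshift r)); move: sum0; rewrite (zcomb_eq0 _ cr) addr0.
by move=> k; case: (split_ordP k) => j ->; [apply: cl | apply: cr].
Qed.

Lemma span_catf x : exists k c, (0 < k)%N /\ x *+ k = zcomb (catf eH e) c.
Proof.
have [b [n [n0 Sn]]] := e_cover x; have [m [d [m0 md]]] := eH_span Sn.
exists (n * m)%N, (catf d (fun j => b j * (n * m)%N%:Z)); rewrite muln_gt0 n0; split=> //.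
by rewrite zcomb_catf2 zcombMz -pmulrn -md -mulrnA -mulrnDl subrK.
Qed.

End Concat.

Lemma rankG_split : rankG Gam = (rankS S + r)%N.
Proof.
have [rH [eH [eH_S eH_indep eH_span]]] := span_rank_basis gen_S.
have eH_in i : in_gen S (eH i) by have [c ->] := eH_S i; apply/in_genE; exists c.
have span x : in_gen S x -> exists k c, (0 < k)%N /\ x *+ k = zcomb eH c.
  by move=> /in_genE[c ->]; apply: eH_span.
rewrite /rankS (zrankE (is_rank_basis eH_in eH_indep span)).
apply: zrankE; apply: (is_rank_basis (e := catf eH e)) => // [|x _].
  exact: zindep_catf.
exact: span_catf.
Qed.

End Complement.

Lemma pcard_kills_S :
  pcard (fun phi : Gam -> G => is_hom phi /\ forall i, i \in S -> phi A`_i = 0)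
  = (mSG S G * #|G| ^ (rankG Gam - rankS S))%N.
Proof.
have [r [e [_ e_cover e_indep]]] :=
  has_basis_mod_all tor_mod_saturated (fun i : 'I_(size s) => s`_i).
have e_cover' x : exists c, tor_mod S (x - zcomb e c).
  by have [c ->] := s_gen x; apply: e_cover.
rewrite (rankG_split e_cover' e_indep) addKn (mSG_hom_set e_cover' e_indep).
apply/pcardE/(has_card_ext _ (has_card_kills_S e_cover' e_indep)) => phi.
by split=> -[hphi kill]; split=> //; apply/kills_in_gen.
Qed.

End GeneratedSubgroup.

End HomCodes.

Lemma prod_indicator (I : finType) (J : pred I) (b : pred I) :
  \prod_(i in J) (b i)%:Z = [forall i in J, b i]%:Z.
Proof.
case: (boolP [forall i in J, b i]) => [/forall_inP Jb|].
  by rewrite big1 // => i /Jb ->.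
by rewrite negb_forall_in => /exists_inP[i iJ /negPf nbi]; rewrite (bigD1 i) //= nbi mul0r.
Qed.

Lemma inclusion_exclusion (F I : finType) (B : pred F) (P : I -> pred F) :
  #|[set w | B w & [forall i, ~~ P i w]]|%:Z =
  \sum_(J : {set I}) (-1) ^+ #|J| * #|[set w | B w & [forall i in J, P i w]]|%:Z.
Proof.
have cardE (Q : pred F) : #|[set w | B w & Q w]|%:Z = \sum_(w | B w) (Q w)%:Z.
  rewrite -sum1_card (big_morph Posz PoszD (erefl 0%:Z)) big_mkcond [RHS]big_mkcond /=.
  by apply: eq_bigr => w _; rewrite !inE; case: (B w); case: (Q w).
under eq_bigr => J _ do rewrite cardE big_distrr /=.
rewrite cardE exchange_big /=; apply: eq_bigr => w _.
have -> : [forall i, ~~ P i w]%:Z = \prod_i (- (P i w)%:Z + 1).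
  by rewrite -(prod_indicator xpredT (fun i => ~~ P i w)); apply: eq_bigr => i _; case: (P i w).
rewrite bigA_distr; apply: eq_bigr => J _.
by rewrite -big_mkcond /= prodrN prod_indicator.
Qed.

Unset Implicit Arguments. Set Strict Implicit.

Theorem mainTheorem10 (Gam : zmodType) (hfg : fin_gen Gam) (A : seq Gam)
    (G : finZmodType) :
  (pcard (@Mset Gam A G))%:Z = chiA A G (#|G|%:Z).
Proof.
have [s s_gen] := hfg.
rewrite (pcardE (has_card_hom_set s_gen (fun phi => forall a, a \in A -> phi a != 0))).
rewrite (hom_set_nonvanishing s_gen) inclusion_exclusion; apply: eq_bigr => S _.
rewrite -(hom_set_vanishing s_gen) -(pcardE (has_card_hom_set s_gen _)) (pcard_kills_S s_gen).
by rewrite PoszM -!natz natrX mulrA.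
Qed.
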